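(* Let $\alpha,\beta\in(0,1)$ with $\alpha+\beta>1$. There is a constant $C$ (depending only on $\alpha,\beta$) such that for all sufficiently large $k$: with the medium-expectation rounding defined in the context, if $X_i$ ($i\in\mathcal{M}_1^*(k)$) are independent indicators with $\mathbb{E}[X_i]=p_i$ and $Y_i$ ($i\in\mathcal{M}_1^*(k)$) are independent indicators with $\mathbb{E}[Y_i]=q_i$, then $$\left\|\sum_{i\in\mathcal{M}_1^*(k)}X_i-\sum_{i\in\mathcal{M}_1^*(k)}Y_i\right\|\le C\left(k^{-\frac{\alpha+\beta-1}{2}}+k^{-\alpha}+k^{-1/2}+k^{-(1-\beta)}\right).$$
   Context: $\|\cdot\|$ is total variation distance. Let $k$ be a positive integer, $\alpha\in(0,1)$, and $p_1,\dots,p_n\in[0,1]$. For $j=0,1,\dots,\lfloor k/2\rfloor$ let $I_j=[j/k,(j+1)/k)$ if $j<\lfloor k/2\rfloor$ and $I_{\lfloor k/2\rfloor}=[\lfloor k/2\rfloor/k,1/2]$; let $I^*_j=\{i:p_i\in I_j\}=\{j_1,\dots,j_{n_j}\}$ (listed in some fixed order, $n_j=|I^*_j|$), $p^j_i:=p_{j_i}$ and $\delta^j_i:=p^j_i-j/k$. Let $\mathcal{M}_1^*(k)=\bigcup_{j=\lfloor k^\alpha\rfloor}^{\lfloor k/2\rfloor}I^*_j$. Medium-expectation rounding: for $j=\lfloor k^\alpha\rfloor,\dots,\lfloor k/2\rfloor$ let $S_j=\sum_{i=1}^{n_j}\delta^j_i$, $m_j=\lfloor kS_j\rfloor$, and set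 $q_{j_i}=(j+1)/k$ for $i=1,\dots,m_j$ and $q_{j_i}=j/k$ for $i=m_j+1,\dots,n_j$. *)

From Stdlib Require Import Reals Lra Lia Arith List.
Import ListNotations.
Open Scope R_scope.

Definition Rleb (x y : R) : bool := if Rle_dec x y then true else false.
Definition Rltb (x y : R) : bool := if Rlt_dec x y then true else false.

(* floor of a real as a nat (used only for nonnegative arguments) *)
Definition nfloor (x : R) : nat := Z.to_nat (Int_part x).

Definition inI (k j : nat) (x : R) : bool :=
  if Nat.ltb j (Nat.div k 2) then
    Rleb (INR j / INR k) x && Rltb x (INR (S j) / INR k)
  else if Nat.eqb j (Nat.div k 2) then
    Rleb (INR j / INR k) x && Rleb x (1/2)
  else false.

Definition Istar (k : nat) (p : nat -> R) (n j : nat) : list nat :=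
  filter (fun i => inI k j (p i)) (seq 0 n).

Definition Sj (k : nat) (p : nat -> R) (n j : nat) : R :=
  fold_right Rplus 0 (map (fun i => p i - INR j / INR k) (Istar k p n j)).

Definition mj (k : nat) (p : nat -> R) (n j : nat) : nat :=
  nfloor (INR k * Sj k p n j).

Fixpoint pos (i : nat) (l : list nat) : nat :=
  match l with
  | [] => 0%nat
  | x :: l' => if Nat.eqb x i then 0%nat else S (pos i l')
  end.

(* rounded value q_i for i in I*_j: the first m_j elements of I*_j
   (positions 1..m_j in the paper, 0..m_j-1 here) go to (j+1)/k, the rest to j/k *)
Definition qround (k : nat) (p : nat -> R) (n j i : nat) : R :=
  if Nat.ltb (pos i (Istar k p n j)) (mj k p n j)
  then INR (S j) / INR k else INR j / INR k.

Definition jrange (k : nat) (alpha : R) : list nat :=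
  let a := nfloor (Rpower (INR k) alpha) in
  seq a (S (Nat.div k 2) - a).

(* M_1^*(k) = union of the I*_j, j in jrange (disjoint union, as a list) *)
Definition M1star (k : nat) (alpha : R) (p : nat -> R) (n : nat) : list nat :=
  flat_map (fun j => Istar k p n j) (jrange k alpha).

Definition Xprobs (k : nat) (alpha : R) (p : nat -> R) (n : nat) : list R :=
  flat_map (fun j => map p (Istar k p n j)) (jrange k alpha).
Definition Yprobs (k : nat) (alpha : R) (p : nat -> R) (n : nat) : list R :=
  flat_map (fun j => map (qround k p n j) (Istar k p n j)) (jrange k alpha).

(* pmf of a sum of independent indicators with the given means (Poisson binomial) *)
Fixpoint pb (l : list R) (m : nat) : R :=
  match l with
  | [] => if Nat.eqb m 0 then 1 else 0
  | q :: l' => q * (match m with O => 0 | S m' => pb l' m' end) + (1 - q) * pb l' m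
  end.

(* total variation distance between the laws of the two sums
   (both supported on {0,...,max(len)}): (1/2) sum_m |P(m) - Q(m)| *)
Definition tv_sum (l1 l2 : list R) : R :=
  / 2 * sum_f_R0 (fun m => Rabs (pb l1 m - pb l2 m)) (Nat.max (length l1) (length l2)).

(** The proof couples the two sums of indicators pair by pair: with
    probability [2c] both indicators of a pair are the same fair coin, otherwise they
    agree except with probability [|q_i - p_i|] (all means lie in [[c, 1-c]], where
    [c = floor(k^alpha)/(4k)]). Conditionally on the coupling, the two sums are
    [Bin(M, 1/2)] shifted by numbers of ones differing by [D], so their L1 distance is
    at most [|D| phi(M)], with [phi(m) <= 2/sqrt(m+1)] the shift distance of
    [Bin(m, 1/2)]. Cauchy-Schwarz gives [L1 <= sqrt (E phi(M)^2) sqrt (E D^2)], with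
    [E phi(M)^2 = O(1/(c N))] ([M ~ Bin(N, 2c)]) and [E D^2 <= (sum (q-p))^2 + sum |q-p|
    = O(N/k)], because the rounding keeps [|q_i - p_i| <= 1/k] and changes each bucket
    total by less than [1/k]. Hence the total variation is [O(k^(-alpha/2))], which is
    within the claimed bound as [beta < 1]. *)

From Pilot Require Import Defs.
From Stdlib Require Import Reals Lra Lia List Permutation ZArith.
Import ListNotations.
Open Scope R_scope.

Fixpoint sumR (f : nat -> R) (n : nat) : R :=
  match n with O => 0 | S n' => sumR f n' + f n' end.

Lemma sumR_ext f g n : (forall w, (w < n)%nat -> f w = g w) -> sumR f n = sumR g n.
Proof.
  induction n as [|n IH]; intros H; simpl; auto.
  rewrite IH by (intros; apply H; lia). now rewrite H by lia.
Qed.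

Lemma sumR_le f g n : (forall w, (w < n)%nat -> f w <= g w) -> sumR f n <= sumR g n.
Proof.
  induction n as [|n IH]; intros H; simpl; [lra|].
  apply Rplus_le_compat; [apply IH; intros; apply H|apply H]; lia.
Qed.

Lemma sumR_const a n : sumR (fun _ => a) n = INR n * a.
Proof. induction n as [|n IH]; simpl sumR; [simpl; ring|]. rewrite IH, S_INR. ring. Qed.

Lemma sumR_nonneg f n : (forall w, (w < n)%nat -> 0 <= f w) -> 0 <= sumR f n.
Proof.
  intros H. apply Rle_trans with (sumR (fun _ => 0) n).
  - rewrite sumR_const. lra.
  - now apply sumR_le.
Qed.

Lemma sumR_plus f g n : sumR (fun w => f w + g w) n = sumR f n + sumR g n.
Proof. induction n; simpl; lra. Qed.

Lemma sumR_scal a f n : sumR (fun w => a * f w) n = a * sumR f n.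
Proof. induction n as [|n IH]; simpl; [ring|]. rewrite IH. ring. Qed.

Lemma sumR_shift f n : sumR f (S n) = f O + sumR (fun w => f (S w)) n.
Proof. induction n as [|n IH]; simpl in *; [ring|]. rewrite IH. ring. Qed.

Lemma sumR_mono f n m : (n <= m)%nat -> (forall w, 0 <= f w) -> sumR f n <= sumR f m.
Proof. intros Hle Hf; induction Hle; simpl; [lra|]. specialize (Hf m). lra. Qed.

Lemma sumR_zero_tail f n m :
  (n <= m)%nat -> (forall w, (n <= w)%nat -> f w = 0) -> sumR f m = sumR f n.
Proof. intros Hle Hf; induction Hle; simpl; auto. rewrite Hf, IHHle by lia. ring. Qed.

Lemma sum_f_R0_sumR f N : sum_f_R0 f N = sumR f (S N).
Proof. induction N as [|N IH]; simpl in *; [ring|]. now rewrite IH. Qed.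

(** * The Poisson-binomial law [pb l] of a sum of independent indicators
    with means [l]. *)

(** [prev f] is [f] shifted by one: the law of [S + 1] if [f] is that of [S]. *)
Definition prev (f : nat -> R) (w : nat) : R := match w with O => 0 | S w' => f w' end.

Lemma pb_cons q l m : pb (q :: l) m = q * prev (pb l) m + (1 - q) * pb l m.
Proof. destruct m; simpl; ring. Qed.

Lemma pb_zero l m : (length l < m)%nat -> pb l m = 0.
Proof.
  revert m; induction l as [|q l IH]; intros m H; simpl in *.
  - destruct (Nat.eqb_spec m 0); [lia|auto].
  - destruct m; [lia|]. rewrite !IH by lia. ring.
Qed.

Definition probs (l : list R) : Prop := forall x, In x l -> 0 <= x <= 1.

Lemma probs_cons q l : probs (q :: l) -> 0 <= q <= 1 /\ probs l.
Proof. intros H; split; [apply H; now left | intros x Hx; apply H; now right]. Qed.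

Lemma pb_nonneg l m : probs l -> 0 <= pb l m.
Proof.
  revert m; induction l as [|q l IH]; intros m H; simpl.
  - destruct (Nat.eqb m 0); lra.
  - destruct (probs_cons q l H) as [Hq Hl].
    destruct m; [pose proof (IH 0%nat Hl)|pose proof (IH m Hl); pose proof (IH (S m) Hl)]; nra.
Qed.

Lemma pb_perm l1 l2 : Permutation l1 l2 -> forall m, pb l1 m = pb l2 m.
Proof.
  induction 1; intros m; auto.
  - rewrite !pb_cons. destruct m; simpl; rewrite ?IHPermutation; auto.
  - destruct m as [|[|m]]; simpl; ring.
  - now rewrite IHPermutation1.
Qed.

(** Splitting off a fair coin: an indicator of mean [p] is the mixture
    [2c Bern(1/2) + (1-p-c) delta_0 + (p-c) delta_1]. *)
Lemma pb_split_half p c L w :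
  pb (p :: L) w = 2 * c * pb (/2 :: L) w + (1 - p - c) * pb L w + (p - c) * pb (1 :: L) w.
Proof. rewrite !pb_cons. field. Qed.

Definition Ex (l : list R) (f : nat -> R) : R := sumR (fun s => pb l s * f s) (S (length l)).

Lemma Ex_nil f : Ex [] f = f O.
Proof. unfold Ex; simpl; ring. Qed.

Lemma Ex_cons r l f : Ex (r :: l) f = r * Ex l (fun s => f (S s)) + (1 - r) * Ex l f.
Proof.
  unfold Ex. simpl length.
  rewrite (sumR_ext _ (fun s => r * (prev (pb l) s * f s) + (1 - r) * (pb l s * f s)))
    by (intros; rewrite pb_cons; ring).
  rewrite sumR_plus, !sumR_scal, sumR_shift. simpl prev.
  replace (sumR (fun w => pb l w * f w) (S (S (length l))))
    with (sumR (fun w => pb l w * f w) (S (length l)))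
    by (simpl; rewrite (pb_zero l (S (length l))) by lia; ring).
  ring.
Qed.

Lemma Ex_ext l f g : (forall s, f s = g s) -> Ex l f = Ex l g.
Proof. intros H; unfold Ex; apply sumR_ext; intros; now rewrite H. Qed.

Lemma Ex_le l f g : probs l -> (forall s, f s <= g s) -> Ex l f <= Ex l g.
Proof.
  intros; unfold Ex; apply sumR_le; intros.
  apply Rmult_le_compat_l; auto. now apply pb_nonneg.
Qed.

Lemma Ex_lin l a b f g : Ex l (fun s => a * f s + b * g s) = a * Ex l f + b * Ex l g.
Proof. unfold Ex. rewrite <- !sumR_scal, <- sumR_plus. apply sumR_ext; intros; ring. Qed.

Lemma Ex_const l a : Ex l (fun _ => a) = a.
Proof. induction l as [|q l IH]; [apply Ex_nil|]. rewrite Ex_cons, !IH. ring. Qed.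

Definition sumL (l : list R) : R := fold_right Rplus 0 l.

Lemma Ex_second_moment l t :
  Ex l (fun s => (INR s - t)^2) = (sumL l - t)^2 + sumL (map (fun q => q * (1 - q)) l).
Proof.
  revert t; induction l as [|q l IH]; intros t; [rewrite Ex_nil; simpl; ring|].
  rewrite Ex_cons, (Ex_ext _ _ (fun s => (INR s - (t - 1))^2)) by (intros; rewrite S_INR; ring).
  rewrite !IH. simpl. ring.
Qed.

Lemma Ex_sq l f : probs l -> (Ex l f)^2 <= Ex l (fun s => (f s)^2).
Proof.
  revert f; induction l as [|q l IH]; intros f H; [rewrite !Ex_nil; lra|].
  destruct (probs_cons q l H) as [Hq Hl]. rewrite !Ex_cons.
  pose proof (IH (fun s => f (S s)) Hl). pose proof (IH f Hl). simpl in *.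
  set (x := Ex l (fun s => f (S s))) in *. set (y := Ex l f) in *.
  assert (0 <= q * (1 - q) * (x - y)^2) by (apply Rmult_le_pos; [nra|apply pow2_ge_0]).
  nra.
Qed.

(** * The symmetric binomial law [Bin(m, 1/2)] and its shift distance. *)
Definition bh (m : nat) : nat -> R := pb (repeat (/2) m).

Lemma probs_repeat x m : 0 <= x <= 1 -> probs (repeat x m).
Proof. intros Hx y Hy; apply repeat_spec in Hy; now subst. Qed.

Lemma bh_S m w : bh (S m) w = /2 * prev (bh m) w + /2 * bh m w.
Proof. unfold bh at 1. simpl repeat. rewrite pb_cons. fold (bh m). lra. Qed.

Lemma bh_ratio m w : INR w * bh m w = (INR m + 1 - INR w) * prev (bh m) w.
Proof.
  revert w; induction m as [|m IH]; intros w.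
  - unfold bh; destruct w as [|[|w]]; simpl; ring.
  - destruct w as [|w]; [simpl; ring|].
    rewrite !bh_S. simpl prev. rewrite bh_S.
    pose proof (IH (S w)) as H1. pose proof (IH w) as H2. simpl prev in H1.
    rewrite !S_INR in *. nra.
Qed.

Lemma bh_diff m w :
  bh m w - prev (bh m) w = 2 * bh (S m) w * (INR m + 1 - 2 * INR w) / (INR m + 1).
Proof.
  pose proof (bh_ratio m w) as Hr. pose proof (pos_INR m).
  rewrite bh_S. field_simplify_eq; [|lra].
  set (b := bh m w) in *. set (pr := prev (bh m) w) in *. nra.
Qed.

Definition phi (m : nat) : R := sumR (fun w => Rabs (bh m w - prev (bh m) w)) (m + 2).

Lemma phi_nonneg m : 0 <= phi m.
Proof. apply sumR_nonneg. intros; apply Rabs_pos. Qed.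

(** [phi m^2 <= 4/(m+1)]: by [bh_diff], [phi m] is [2/(m+1)] times the mean absolute
    deviation of [Bin(m+1,1/2)], which Jensen bounds by its standard deviation. *)
Lemma phi_sq m : (phi m)^2 <= 4 / (INR m + 1).
Proof.
  assert (Hm : INR m + 1 > 0) by (pose proof (pos_INR m); lra).
  assert (Hl : probs (repeat (/2) (S m))) by (apply probs_repeat; lra).
  assert (E : phi m = Ex (repeat (/2) (S m)) (fun w => 2 * Rabs (INR m + 1 - 2 * INR w) / (INR m + 1))).
  { unfold phi, Ex. rewrite repeat_length. replace (m + 2)%nat with (S (S m)) by lia.
    apply sumR_ext; intros w _. rewrite bh_diff. fold (bh (S m)).
    assert (Hb : 0 <= bh (S m) w) by (apply pb_nonneg, Hl).
    assert (Hi : 0 < / (INR m + 1)) by (apply Rinv_0_lt_compat; lra).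
    unfold Rdiv. rewrite !Rabs_mult, (Rabs_right 2), (Rabs_right (/ (INR m + 1))),
      (Rabs_right (bh (S m) w)) by lra. ring. }
  rewrite E. eapply Rle_trans; [now apply Ex_sq|].
  rewrite (Ex_ext _ _ (fun s => (16 / (INR m + 1)^2) * (INR s - (INR m + 1)/2)^2 + 0 * 0)).
  2:{ intros s. unfold Rdiv. rewrite !Rpow_mult_distr, pow2_abs. field. lra. }
  rewrite Ex_lin, Ex_second_moment, Ex_const.
  assert (Hs : forall j x, sumL (repeat x j) = INR j * x).
  { induction j as [|j IH]; intros; [simpl; ring|]. rewrite S_INR. unfold sumL in *; simpl. rewrite IH. ring. }
  assert (Hv : forall j x, sumL (map (fun q => q * (1 - q)) (repeat x j)) = INR j * (x * (1 - x))).
  { induction j as [|j IH]; intros; [simpl; ring|]. rewrite S_INR. unfold sumL in *; simpl. rewrite IH. ring. }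
  rewrite Hs, Hv, S_INR. apply Req_le. field. lra.
Qed.

Definition L1 (n : nat) (l1 l2 : list R) : R := sumR (fun w => Rabs (pb l1 w - pb l2 w)) n.

Definition L1shift (n : nat) (l : list R) : R := sumR (fun w => Rabs (pb l w - prev (pb l) w)) n.

Lemma L1_perm n l1 l2 l1' l2' :
  Permutation l1 l1' -> Permutation l2 l2' -> L1 n l1 l2 = L1 n l1' l2'.
Proof. intros H1 H2; apply sumR_ext; intros. now rewrite (pb_perm _ _ H1), (pb_perm _ _ H2). Qed.

Lemma L1_triangle n a b c : L1 n a c <= L1 n a b + L1 n b c.
Proof.
  unfold L1. rewrite <- sumR_plus. apply sumR_le; intros.
  replace (pb a w - pb c w) with ((pb a w - pb b w) + (pb b w - pb c w)) by ring.
  apply Rabs_triang.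
Qed.

Lemma L1_sym n a b : L1 n a b = L1 n b a.
Proof. apply sumR_ext; intros; apply Rabs_minus_sym. Qed.

Lemma pb_one A w : pb (1 :: A) w = prev (pb A) w.
Proof. rewrite pb_cons. ring. Qed.

(** Adding a sure indicator only shifts the law, which cannot increase [L1shift]. *)
Lemma L1shift_cons_one n A : L1shift n (1 :: A) <= L1shift n A.
Proof.
  unfold L1shift. destruct n; [simpl; lra|].
  rewrite sumR_shift, (sumR_ext _ (fun w => Rabs (pb A w - prev (pb A) w))).
  2:{ intros. change (prev (pb (1 :: A)) (S w)) with (pb (1 :: A) w). now rewrite !pb_one. }
  rewrite pb_one. simpl prev. rewrite Rminus_0_r, Rabs_R0, Rplus_0_l.
  apply sumR_mono; [lia|intros; apply Rabs_pos].
Qed.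

Lemma L1shift_ones n j L : L1shift n (repeat 1 j ++ L) <= L1shift n L.
Proof. induction j; simpl; [lra|]. eapply Rle_trans; [apply L1shift_cons_one|auto]. Qed.

Lemma L1shift_halves n m : L1shift n (repeat (/2) m) <= phi m.
Proof.
  unfold phi, L1shift. fold (bh m). destruct (le_lt_dec n (m + 2)).
  - apply sumR_mono; auto. intros; apply Rabs_pos.
  - rewrite (sumR_zero_tail _ (m + 2) n); [lra|lia|].
    intros w Hw. unfold bh. destruct w; [lia|]. simpl prev.
    rewrite !pb_zero by (rewrite repeat_length; lia). rewrite Rminus_0_r. apply Rabs_R0.
Qed.

Lemma L1_ones n L u v :
  L1 n (repeat 1 u ++ L) (repeat 1 v ++ L) <= Rabs (INR u - INR v) * L1shift n L.
Proof.
  assert (Hd : forall u d, L1 n (repeat 1 u ++ L) (repeat 1 (u + d) ++ L) <= INR d * L1shift n L).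
  { intros u0 d. induction d as [|d IH].
    - rewrite Nat.add_0_r. unfold L1. rewrite (sumR_ext _ (fun _ => 0)), sumR_const; simpl; [lra|].
      intros. rewrite Rminus_diag. apply Rabs_R0.
    - eapply Rle_trans; [apply (L1_triangle _ _ (repeat 1 (u0 + d) ++ L))|].
      assert (L1 n (repeat 1 (u0 + d) ++ L) (repeat 1 (u0 + S d) ++ L)
              <= L1shift n (repeat 1 (u0 + d) ++ L)).
      { rewrite Nat.add_succ_r. apply sumR_le. intros. simpl repeat. rewrite <- app_comm_cons, pb_one. lra. }
      pose proof (L1shift_ones n (u0 + d) L). rewrite S_INR. lra. }
  destruct (le_lt_dec u v) as [Huv|Huv].
  - pose proof (Hd u (v - u)%nat) as H. replace (u + (v - u))%nat with v in H by lia.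
    rewrite minus_INR in H by lia. rewrite Rabs_minus_sym, Rabs_right; auto.
    apply le_INR in Huv. lra.
  - pose proof (Hd v (u - v)%nat) as H. replace (v + (u - v))%nat with u in H by lia.
    rewrite minus_INR in H by lia. rewrite L1_sym, Rabs_right; auto.
    apply lt_INR in Huv. lra.
Qed.

(** * Coupling two Poisson-binomial laws through shared fair coins.

    A pair of means [(p, q)] with [c <= p, q <= 1 - c] is coupled so that with
    probability [2c] both indicators are the same fair coin, with probability
    [min p q - c] both are 1, with probability [1 - max p q - c] both are 0, and
    with probability [|q - p|] they disagree. *)

Lemma Rabs_mix4 a1 a2 a3 a4 d1 d2 d3 d4 :
  0 <= a1 -> 0 <= a2 -> 0 <= a3 -> 0 <= a4 ->
  Rabs (a1 * d1 + a2 * d2 + a3 * d3 + a4 * d4)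
  <= a1 * Rabs d1 + a2 * Rabs d2 + a3 * Rabs d3 + a4 * Rabs d4.
Proof.
  intros. repeat (eapply Rle_trans; [apply Rabs_triang|apply Rplus_le_compat]);
    rewrite Rabs_mult, Rabs_right by lra; lra.
Qed.

Lemma L1_split n c x y A B : 0 <= c -> c <= x -> x <= y -> y <= 1 - c ->
  L1 n (x :: A) (y :: B)
  <= 2 * c * L1 n (/2 :: A) (/2 :: B) + (1 - y - c) * L1 n A B
     + (x - c) * L1 n (1 :: A) (1 :: B) + (y - x) * L1 n A (1 :: B).
Proof.
  intros. unfold L1. rewrite <- !sumR_scal, <- !sumR_plus. apply sumR_le; intros w _.
  rewrite (pb_split_half x c), (pb_split_half y c).
  eapply Rle_trans; [|apply (Rabs_mix4 (2 * c) (1 - y - c) (x - c) (y - x)); lra].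
  right. f_equal. ring.
Qed.

Definition goodP (c : R) (P : list (R * R)) : Prop :=
  forall pq, In pq P -> c <= Rmin (fst pq) (snd pq) /\ Rmax (fst pq) (snd pq) <= 1 - c.

Lemma goodP_cons c p q P : goodP c ((p, q) :: P) ->
  c <= Rmin p q /\ Rmax p q <= 1 - c /\ goodP c P.
Proof.
  intros H. destruct (H (p, q)) as [H1 H2]; [now left|].
  split; [exact H1|split; [exact H2|]]. intros x Hx; apply H; now right.
Qed.

(** [G1 c m P = E phi(m + M)^2] where [M ~ Bin(|P|, 2c)] counts the shared fair coins. *)
Definition G1 (c : R) (m : nat) (P : list (R * R)) : R :=
  Ex (map (fun _ => 2 * c) P) (fun s => (phi (m + s))^2).

Lemma G1_cons c m pq P : G1 c m (pq :: P) = 2 * c * G1 c (S m) P + (1 - 2 * c) * G1 c m P.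
Proof.
  unfold G1. simpl map. rewrite Ex_cons. f_equal. f_equal.
  apply Ex_ext. intros. now rewrite Nat.add_succ_r.
Qed.

Lemma probs_coins c P : 0 <= 2 * c <= 1 -> probs (map (fun _ : R * R => 2 * c) P).
Proof. intros Hc x Hx. apply in_map_iff in Hx. destruct Hx as [? [? ?]]. now subst. Qed.

Lemma G1_nonneg c m P : 0 <= 2 * c <= 1 -> 0 <= G1 c m P.
Proof.
  intros Hc. unfold G1. rewrite <- (Ex_const (map (fun _ => 2 * c) P) 0).
  apply Ex_le; [now apply probs_coins|intros; apply pow2_ge_0].
Qed.

(** [G2 d P = E (d - D)^2] where [D] is the signed number of disagreeing pairs. *)
Fixpoint G2 (d : R) (P : list (R * R)) : R :=
  match P with
  | [] => d^2
  | (p, q) :: P' => (1 - Rabs (q - p)) * G2 d P'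
      + Rabs (q - p) * (if Rle_dec p q then G2 (d - 1) P' else G2 (d + 1) P')
  end.

Lemma goodP_gap c p q P : 0 <= c -> goodP c ((p, q) :: P) -> 0 <= Rabs (q - p) <= 1.
Proof.
  intros Hc H. destruct (goodP_cons c p q P H) as [H1 [H2 _]]. split; [apply Rabs_pos|].
  unfold Rmin, Rmax in *. destruct (Rle_dec p q); unfold Rabs; destruct Rcase_abs; lra.
Qed.

Lemma G2_nonneg c d P : 0 <= c -> goodP c P -> 0 <= G2 d P.
Proof.
  intros Hc; revert d; induction P as [|[p q] P IH]; intros d HP; simpl; [apply pow2_ge_0|].
  pose proof (goodP_gap c p q P Hc HP). destruct (goodP_cons c p q P HP) as [_ [_ HP']].
  destruct (Rle_dec p q); apply Rplus_le_le_0_compat; apply Rmult_le_pos; try lra; apply IH; auto.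
Qed.

Lemma cs_add x y A B A' B' : 0 <= A -> 0 <= B -> 0 <= A' -> 0 <= B' ->
  x <= sqrt A * sqrt B -> y <= sqrt A' * sqrt B' -> x + y <= sqrt (A + A') * sqrt (B + B').
Proof.
  intros. eapply Rle_trans; [apply Rplus_le_compat; eauto|].
  rewrite <- (sqrt_mult (A + A') (B + B')) by lra.
  rewrite <- (sqrt_square (sqrt A * sqrt B + sqrt A' * sqrt B'))
    by (pose proof (sqrt_pos A); pose proof (sqrt_pos B); pose proof (sqrt_pos A');
        pose proof (sqrt_pos B'); nra).
  apply sqrt_le_1_alt.
  pose proof (sqrt_sqrt A ltac:(lra)). pose proof (sqrt_sqrt B ltac:(lra)).
  pose proof (sqrt_sqrt A' ltac:(lra)). pose proof (sqrt_sqrt B' ltac:(lra)).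
  assert (0 <= (sqrt A * sqrt B' - sqrt A' * sqrt B)^2) by apply pow2_ge_0. nra.
Qed.

Lemma cs_scal s x A B : 0 <= s -> 0 <= A -> 0 <= B ->
  x <= sqrt A * sqrt B -> s * x <= sqrt (s * A) * sqrt (s * B).
Proof.
  intros. rewrite !sqrt_mult by lra.
  replace (sqrt s * sqrt A * (sqrt s * sqrt B)) with ((sqrt s * sqrt s) * (sqrt A * sqrt B)) by ring.
  rewrite sqrt_sqrt by lra. now apply Rmult_le_compat_l.
Qed.

Lemma cs4 a1 a2 a3 a4 x1 x2 x3 x4 A1 A2 A3 A4 B1 B2 B3 B4 :
  0 <= a1 -> 0 <= a2 -> 0 <= a3 -> 0 <= a4 ->
  0 <= A1 -> 0 <= A2 -> 0 <= A3 -> 0 <= A4 -> 0 <= B1 -> 0 <= B2 -> 0 <= B3 -> 0 <= B4 ->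
  x1 <= sqrt A1 * sqrt B1 -> x2 <= sqrt A2 * sqrt B2 -> x3 <= sqrt A3 * sqrt B3 -> x4 <= sqrt A4 * sqrt B4 ->
  a1 * x1 + a2 * x2 + a3 * x3 + a4 * x4 <=
  sqrt (a1 * A1 + a2 * A2 + a3 * A3 + a4 * A4) * sqrt (a1 * B1 + a2 * B2 + a3 * B3 + a4 * B4).
Proof.
  intros.
  assert (forall a A, 0 <= a -> 0 <= A -> 0 <= a * A) by (intros; now apply Rmult_le_pos).
  repeat (apply cs_add; try apply cs_scal; auto; try (repeat apply Rplus_le_le_0_compat; auto)).
Qed.

(** State of the coupling: [m] shared fair coins, [u] sure indicators and the means [l]
    still to be processed. *)
Definition config (m u : nat) (l : list R) : list R := repeat (/2) m ++ repeat 1 u ++ l.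

Lemma config_cons m u a l : Permutation (config m u (a :: l)) (a :: config m u l).
Proof. unfold config. rewrite app_assoc. symmetry. rewrite app_assoc. apply Permutation_middle. Qed.

Lemma config_one m u l : Permutation (1 :: config m u l) (config m (S u) l).
Proof. unfold config. simpl repeat. apply Permutation_middle. Qed.

(** At the leaves the two laws are
    [Bin(m,1/2)] shifted by [u] and by [v], at L1 distance at most [|u - v| phi m]; the
    Cauchy-Schwarz inequality then separates smoothing ([G1]) from discrepancy ([G2]). *)
Lemma L1_coupling c P : 0 <= c -> 2 * c <= 1 -> goodP c P ->
  forall m u v n, L1 n (config m u (map fst P)) (config m v (map snd P))
                  <= sqrt (G1 c m P) * sqrt (G2 (INR u - INR v) P).
Proof.
  intros Hc Hc1. induction P as [|[p q] P IH]; intros HP m u v n.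
  - unfold config, G1. simpl map. rewrite Ex_nil, Nat.add_0_r, sqrt_pow2 by apply phi_nonneg.
    change (G2 (INR u - INR v) []) with ((INR u - INR v)^2). rewrite <- Rsqr_pow2, sqrt_Rsqr_abs, !app_nil_r, (L1_perm n _ _ (repeat 1 u ++ repeat (/2) m)
      (repeat 1 v ++ repeat (/2) m)) by apply Permutation_app_comm.
    eapply Rle_trans; [apply L1_ones|]. rewrite Rmult_comm.
    apply Rmult_le_compat_r; [apply Rabs_pos|apply L1shift_halves].
  - pose proof (goodP_gap c p q P Hc HP) as Hgap.
    destruct (goodP_cons c p q P HP) as [Hmin [Hmax HP']]. specialize (IH HP').
    assert (G1p : forall m, 0 <= G1 c m P) by (intros; apply G1_nonneg; lra).
    assert (G2p : forall d, 0 <= G2 d P) by (intros; eapply G2_nonneg; eauto).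
    set (Lx := config m u (map fst P)) in *. set (Ly := config m v (map snd P)) in *.
    simpl map. rewrite (L1_perm n _ _ (p :: Lx) (q :: Ly)) by apply config_cons.
    (* the five configurations reachable in one step *)
    assert (I1 : L1 n (/2 :: Lx) (/2 :: Ly) <= sqrt (G1 c (S m) P) * sqrt (G2 (INR u - INR v) P))
      by apply (IH (S m)).
    assert (I2 : L1 n Lx Ly <= sqrt (G1 c m P) * sqrt (G2 (INR u - INR v) P)) by apply IH.
    assert (I3 : L1 n (1 :: Lx) (1 :: Ly) <= sqrt (G1 c m P) * sqrt (G2 (INR u - INR v) P)).
    { unfold Lx, Ly. rewrite (L1_perm n _ _ _ _ (config_one _ _ _) (config_one _ _ _)).
      replace (INR u - INR v) with (INR (S u) - INR (S v)) by (rewrite !S_INR; ring). apply IH. }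
    assert (I4 : L1 n Lx (1 :: Ly) <= sqrt (G1 c m P) * sqrt (G2 (INR u - INR v - 1) P)).
    { unfold Lx, Ly. rewrite (L1_perm n _ _ _ _ (Permutation_refl _) (config_one _ _ _)).
      replace (INR u - INR v - 1) with (INR u - INR (S v)) by (rewrite !S_INR; ring). apply IH. }
    assert (I5 : L1 n Ly (1 :: Lx) <= sqrt (G1 c m P) * sqrt (G2 (INR u - INR v + 1) P)).
    { unfold Lx, Ly. rewrite L1_sym, (L1_perm n _ _ _ _ (config_one _ _ _) (Permutation_refl _)).
      replace (INR u - INR v + 1) with (INR (S u) - INR v) by (rewrite !S_INR; ring). apply IH. }
    rewrite G1_cons. simpl G2. destruct (Rle_dec p q) as [Hpq|Hpq].
    + rewrite Rmax_right, Rmin_left, Rabs_right in * by lra.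
      eapply Rle_trans; [apply (L1_split n c); lra|].
      replace (1 - 2 * c) with ((1 - q - c) + (p - c) + (q - p)) by ring.
      replace (1 - (q - p)) with (2 * c + (1 - q - c) + (p - c)) by ring.
      rewrite !Rmult_plus_distr_r, <- !Rplus_assoc. apply cs4; auto; lra.
    + rewrite Rmax_left, Rmin_right, Rabs_left in * by lra.
      rewrite L1_sym. eapply Rle_trans; [apply (L1_split n c); lra|].
      rewrite (L1_sym n (/2 :: Ly)), (L1_sym n Ly), (L1_sym n (1 :: Ly)).
      replace (1 - 2 * c) with ((1 - p - c) + (q - c) + (p - q)) by ring.
      replace (1 - - (q - p)) with (2 * c + (1 - p - c) + (q - c)) by ring.
      replace (- (q - p)) with (p - q) by ring.
      rewrite !Rmult_plus_distr_r, <- !Rplus_assoc. apply cs4; auto; lra.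
Qed.

Definition drift (P : list (R * R)) : R := fold_right (fun pq acc => snd pq - fst pq + acc) 0 P.
Definition absdrift (P : list (R * R)) : R :=
  fold_right (fun pq acc => Rabs (snd pq - fst pq) + acc) 0 P.

Lemma G2_bound c P : 0 <= c -> goodP c P -> forall d, G2 d P <= (d - drift P)^2 + absdrift P.
Proof.
  intros Hc; induction P as [|[p q] P IH]; intros HP d; [simpl; unfold drift, absdrift; simpl; lra|].
  pose proof (goodP_gap c p q P Hc HP) as Hgap. destruct (goodP_cons c p q P HP) as [_ [_ HP']].
  specialize (IH HP'). simpl. fold (drift P) (absdrift P).
  set (M := drift P) in *. set (V := absdrift P) in *.
  destruct (Rle_dec p q) as [Hpq|Hpq].
  - rewrite Rabs_right in * by lra. pose proof (IH d). pose proof (IH (d - 1)).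
    apply Rle_trans with ((1 - (q - p)) * ((d - M)^2 + V) + (q - p) * ((d - 1 - M)^2 + V));
      [apply Rplus_le_compat; apply Rmult_le_compat_l; lra|nra].
  - rewrite Rabs_left in * by lra. pose proof (IH d). pose proof (IH (d + 1)).
    apply Rle_trans with ((1 - - (q - p)) * ((d - M)^2 + V) + - (q - p) * ((d + 1 - M)^2 + V));
      [apply Rplus_le_compat; apply Rmult_le_compat_l; lra|nra].
Qed.

Lemma drift_le_absdrift P : Rabs (drift P) <= absdrift P.
Proof.
  induction P; unfold drift, absdrift in *; simpl; [rewrite Rabs_R0; lra|].
  eapply Rle_trans; [apply Rabs_triang|lra].
Qed.

Lemma absdrift_bound P e :
  (forall pq, In pq P -> Rabs (snd pq - fst pq) <= e) -> absdrift P <= INR (length P) * e.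
Proof.
  induction P as [|pq P IH]; intros H; unfold absdrift in *; simpl length; [simpl; lra|].
  rewrite S_INR. simpl fold_right.
  assert (Rabs (snd pq - fst pq) <= e) by (apply H; now left).
  assert (fold_right (fun pq acc => Rabs (snd pq - fst pq) + acc) 0 P <= INR (length P) * e)
    by (apply IH; intros; apply H; now right).
  lra.
Qed.

(** Elementary estimate replacing [E 1/(M+1)] by a quantity controlled by
    mean and variance of [M]. *)
Lemma inv_bound x t : 0 <= x -> 0 < t -> 1 / (x + 1) <= 2 / (t + 2) + 4 * (x - t)^2 / t^2.
Proof.
  intros Hx Ht. assert (0 <= 4 * (x - t)^2 / t^2)
    by (apply Rmult_le_pos; [apply Rmult_le_pos; [lra|apply pow2_ge_0]
                            |apply Rlt_le, Rinv_0_lt_compat, pow_lt; lra]).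
  destruct (Rle_dec (t / 2) x).
  - assert (1 / (x + 1) <= 2 / (t + 2)).
    { unfold Rdiv. rewrite Rmult_1_l. apply Rmult_le_reg_r with ((x + 1) * (t + 2)); [nra|].
      field_simplify; lra. }
    lra.
  - assert (1 / (x + 1) <= 1)
      by (unfold Rdiv; rewrite Rmult_1_l, <- Rinv_1; apply Rinv_le_contravar; lra).
    assert (1 <= 4 * (x - t)^2 / t^2).
    { apply Rmult_le_reg_r with (t^2); [nra|]. unfold Rdiv. rewrite Rmult_assoc, Rinv_l by nra. nra. }
    assert (0 < 2 / (t + 2)) by (apply Rdiv_lt_0_compat; lra). lra.
Qed.

Lemma G1_bound c m P : 0 < c -> 2 * c <= 1 -> (1 <= length P)%nat ->
  G1 c m P <= 24 / (2 * c * INR (length P)).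
Proof.
  intros Hc Hc1 HN. set (l := map (fun _ : R * R => 2 * c) P).
  set (t := 2 * c * INR (length P)).
  assert (Ht : 0 < t) by (apply Rmult_lt_0_compat; [lra|apply lt_0_INR; lia]).
  assert (Hl : probs l) by (apply probs_coins; lra).
  unfold G1. fold l.
  eapply Rle_trans; [apply (Ex_le l _ (fun s => 4 * (2 / (t + 2)) + 16 / t^2 * (INR s - t)^2)); auto|].
  { intros s. eapply Rle_trans; [apply phi_sq|].
    pose proof (inv_bound (INR s) t (pos_INR s) Ht). rewrite plus_INR.
    pose proof (pos_INR m). pose proof (pos_INR s).
    apply Rle_trans with (4 * (1 / (INR s + 1))).
    - unfold Rdiv. rewrite Rmult_1_l. apply Rmult_le_compat_l; [lra|apply Rinv_le_contravar; lra].
    - replace (16 / t^2 * (INR s - t)^2) with (4 * (4 * (INR s - t)^2 / t^2)) by (field; lra). lra. }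
  rewrite (Ex_ext _ _ (fun s => (4 * (2 / (t + 2))) * 1 + (16 / t^2) * (INR s - t)^2)) by (intros; ring).
  rewrite Ex_lin, Ex_const, Ex_second_moment.
  assert (Hs : sumL l = t).
  { unfold l, t. clear. induction P; [unfold sumL; simpl; ring|].
    simpl length. rewrite S_INR. unfold sumL in *. simpl. rewrite IHP. ring. }
  assert (Hv : sumL (map (fun q => q * (1 - q)) l) <= t).
  { unfold l, t. clear - Hc Hc1. induction P; [unfold sumL; simpl; lra|].
    simpl length. rewrite S_INR. unfold sumL in *. simpl. nra. }
  rewrite Hs. replace ((t - t)^2) with 0 by ring.
  assert (16 / t^2 * (0 + sumL (map (fun q => q * (1 - q)) l)) <= 16 / t).
  { apply Rle_trans with (16 / t^2 * t).
    - apply Rmult_le_compat_l; [|lra]. unfold Rdiv. apply Rmult_le_pos; [lra|].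
      apply Rlt_le, Rinv_0_lt_compat. nra.
    - right. field. lra. }
  assert (4 * (2 / (t + 2)) <= 8 / t).
  { unfold Rdiv. apply Rmult_le_reg_r with (t * (t + 2)); [nra|]. field_simplify; lra. }
  assert (8 / t + 16 / t = 24 / t) by (field; lra). lra.
Qed.

Lemma L1_pairs_bound c e P : 0 < c -> 2 * c <= 1 -> goodP c P ->
  (forall pq, In pq P -> Rabs (snd pq - fst pq) <= e) -> Rabs (drift P) <= 1 ->
  L1 (S (length P)) (map fst P) (map snd P) <= sqrt (24 * e / c).
Proof.
  intros Hc Hc1 HP He Hd.
  destruct (length P) as [|N] eqn:HN.
  - apply length_zero_iff_nil in HN. subst P. unfold L1. simpl.
    rewrite Rminus_diag, Rabs_R0, Rplus_0_l. apply sqrt_pos.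
  - rewrite <- HN.
    pose proof (L1_coupling c P (Rlt_le _ _ Hc) Hc1 HP 0 0 0 (S (length P))) as HL.
    unfold config in HL. simpl in HL. rewrite Rminus_0_r in HL.
    assert (G1b : G1 c 0 P <= 24 / (2 * c * INR (length P))) by (apply G1_bound; auto; lia).
    assert (Hnu : absdrift P <= INR (length P) * e) by now apply absdrift_bound.
    pose proof (drift_le_absdrift P).
    assert (G2b : G2 0 P <= 2 * INR (length P) * e).
    { eapply Rle_trans; [apply (G2_bound c P (Rlt_le _ _ Hc) HP 0)|].
      rewrite Rminus_0_l, <- Rsqr_pow2, <- Rsqr_neg, Rsqr_abs, Rsqr_pow2.
      pose proof (Rabs_pos (drift P)). nra. }
    assert (HN1 : 1 <= INR (length P)) by (rewrite HN, S_INR; pose proof (pos_INR N); lra).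
    eapply Rle_trans; [apply HL|]. rewrite <- sqrt_mult by (apply G1_nonneg || eapply G2_nonneg; eauto; lra).
    apply sqrt_le_1_alt.
    apply Rle_trans with (24 / (2 * c * INR (length P)) * (2 * INR (length P) * e)).
    + apply Rmult_le_compat; auto; [apply G1_nonneg; lra|eapply G2_nonneg; eauto; lra].
    + right. field. lra.
Qed.

(** * The medium-expectation rounding. *)

Lemma nfloor_spec x : 0 <= x -> INR (nfloor x) <= x < INR (nfloor x) + 1.
Proof.
  intros Hx. unfold nfloor. destruct (base_Int_part x) as [H1 H2].
  assert (H0 : (-1 < Int_part x)%Z) by (apply lt_IZR; simpl; lra).
  rewrite INR_IZR_INZ, Z2Nat.id by lia. lra.
Qed.

Lemma half_bounds k : INR (Nat.div k 2) * 2 <= INR k <= INR (Nat.div k 2) * 2 + 1.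
Proof.
  pose proof (Nat.div_mod k 2 ltac:(lia)). pose proof (Nat.mod_upper_bound k 2 ltac:(lia)).
  assert (H1 : (2 * Nat.div k 2 <= k <= 2 * Nat.div k 2 + 1)%nat) by lia.
  destruct H1 as [H1 H2]. apply le_INR in H1, H2.
  rewrite plus_INR, mult_INR in *. simpl (INR 2) in *. simpl (INR 1) in *. lra.
Qed.

Lemma inI_facts k j x : (1 <= k)%nat -> (j <= Nat.div k 2)%nat -> inI k j x = true ->
  INR j / INR k <= x /\ x <= INR (S j) / INR k /\ x <= 1/2.
Proof.
  intros Hk Hj H. assert (Hk' : 0 < INR k) by (apply lt_0_INR; lia).
  pose proof (half_bounds k) as Hh.
  unfold inI, Rleb, Rltb in H. destruct (Nat.ltb_spec j (Nat.div k 2)).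
  - destruct (Rle_dec (INR j / INR k) x), (Rlt_dec x (INR (S j) / INR k)); try discriminate.
    assert (INR (S j) <= INR (Nat.div k 2)) by (apply le_INR; lia).
    assert (INR (S j) / INR k <= 1/2)
      by (apply Rmult_le_reg_r with (INR k); [lra|field_simplify; lra]).
    lra.
  - destruct (Nat.eqb_spec j (Nat.div k 2)); [subst j|discriminate].
    destruct (Rle_dec (INR (Nat.div k 2) / INR k) x), (Rle_dec x (1/2)); try discriminate.
    assert (1/2 <= INR (S (Nat.div k 2)) / INR k)
      by (rewrite S_INR; apply Rmult_le_reg_r with (INR k); [lra|field_simplify; lra]).
    lra.
Qed.

Definition sumOver (f : nat -> R) (L : list nat) : R := fold_right (fun i acc => f i + acc) 0 L.

Lemma sumOver_ext f g L : (forall i, In i L -> f i = g i) -> sumOver f L = sumOver g L.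
Proof.
  induction L as [|x L IH]; intros H; simpl; auto.
  rewrite IH by (intros; apply H; now right). now rewrite H by now left.
Qed.

Lemma sumOver_bounds f e L : (forall i, In i L -> 0 <= f i <= e) -> 0 <= sumOver f L <= INR (length L) * e.
Proof.
  induction L as [|x L IH]; intros H; simpl length; [simpl; lra|].
  rewrite S_INR. simpl. assert (0 <= f x <= e) by (apply H; now left).
  assert (0 <= sumOver f L <= INR (length L) * e) by (apply IH; intros; apply H; now right). lra.
Qed.

Lemma sumOver_map f L : fold_right Rplus 0 (map f L) = sumOver f L.
Proof. induction L as [|x L IH]; simpl; auto. now rewrite IH. Qed.

Lemma sumOver_sub_const f b L : sumOver (fun i => f i - b) L = sumOver f L - INR (length L) * b.
Proof.
  induction L as [|x L IH]; [simpl; ring|].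
  cbn [length]. rewrite S_INR. unfold sumOver in *. cbn [fold_right]. rewrite IH. ring.
Qed.

Lemma sumOver_pos (g : nat -> R) L : NoDup L -> sumOver (fun i => g (Defs.pos i L)) L = sumR g (length L).
Proof.
  revert g; induction L as [|x L IH]; intros g HL; [reflexivity|].
  inversion HL; subst. simpl length. rewrite sumR_shift. simpl. rewrite Nat.eqb_refl. f_equal.
  rewrite <- IH by auto. apply sumOver_ext. intros i Hi.
  destruct (Nat.eqb_spec x i); [subst; contradiction|reflexivity].
Qed.

Lemma sumR_threshold n m A B : (m <= n)%nat ->
  sumR (fun t => if Nat.ltb t m then A else B) n = INR m * A + INR (n - m) * B.
Proof.
  induction n as [|n IH]; intros H; [replace m with 0%nat by lia; simpl; ring|].
  destruct (Nat.eq_dec m (S n)) as [->|Hne].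
  - rewrite (sumR_ext _ (fun _ => A)), sumR_const, Nat.sub_diag; [simpl; ring|].
    intros w Hw. now destruct (Nat.ltb_spec w (S n)); [|lia].
  - simpl sumR. rewrite IH by lia. destruct (Nat.ltb_spec n m); [lia|].
    replace (S n - m)%nat with (S (n - m)) by lia. rewrite S_INR. ring.
Qed.

Definition bucket k p n j : list (R * R) := map (fun i => (p i, qround k p n j i)) (Istar k p n j).
Definition pairs k alpha p n : list (R * R) := flat_map (bucket k p n) (jrange k alpha).

Lemma map_flat_map {A B C} (f : B -> C) (g : A -> list B) l :
  map f (flat_map g l) = flat_map (fun x => map f (g x)) l.
Proof. induction l; simpl; auto. now rewrite map_app, IHl. Qed.

Lemma Xprobs_pairs k alpha p n : Xprobs k alpha p n = map fst (pairs k alpha p n).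
Proof. unfold Xprobs, pairs. rewrite map_flat_map. apply flat_map_ext. intros. unfold bucket. now rewrite map_map. Qed.

Lemma Yprobs_pairs k alpha p n : Yprobs k alpha p n = map snd (pairs k alpha p n).
Proof. unfold Yprobs, pairs. rewrite map_flat_map. apply flat_map_ext. intros. unfold bucket. now rewrite map_map. Qed.

Lemma drift_bucket_sum k p n j :
  drift (bucket k p n j) = sumOver (qround k p n j) (Istar k p n j) - sumOver p (Istar k p n j).
Proof. unfold bucket, drift. induction (Istar k p n j); simpl; [ring|]. rewrite IHl. unfold sumOver; simpl; ring. Qed.

(** The point of the rounding: within a bucket the total mean decreases by
    [S_j - floor(k S_j)/k], i.e. by less than [1/k]. *)
Lemma drift_bucket k p n j : (1 <= k)%nat -> (j <= Nat.div k 2)%nat ->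
  - / INR k <= drift (bucket k p n j) <= 0.
Proof.
  intros Hk Hj. assert (Hk' : 0 < INR k) by (apply lt_0_INR; lia).
  set (L := Istar k p n j).
  assert (HL : forall i, In i L -> INR j / INR k <= p i <= INR (S j) / INR k).
  { intros i Hi. apply filter_In in Hi. destruct Hi as [_ Hi].
    destruct (inI_facts k j (p i) Hk Hj Hi) as [? [? ?]]. lra. }
  set (m := mj k p n j). set (s := Sj k p n j).
  assert (Es : s = sumOver p L - INR (length L) * (INR j / INR k)).
  { unfold s, Sj. fold L. now rewrite sumOver_map, sumOver_sub_const. }
  assert (Hs : 0 <= s <= INR (length L) * / INR k).
  { rewrite Es. pose proof (sumOver_bounds (fun i => p i - INR j / INR k) (/ INR k) L) as B.
    rewrite sumOver_sub_const in B. apply B.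
    intros i Hi. specialize (HL i Hi). rewrite S_INR in HL. unfold Rdiv in HL. lra. }
  assert (Hm : INR m <= INR k * s < INR m + 1) by (apply nfloor_spec; nra).
  assert (Hml : (m <= length L)%nat).
  { apply INR_le. assert (INR k * s <= INR (length L)); [|lra].
    apply Rle_trans with (INR k * (INR (length L) * / INR k)); [apply Rmult_le_compat_l; lra|].
    right. field. lra. }
  assert (Eq : sumOver (qround k p n j) L = INR m * (INR (S j) / INR k) + INR (length L - m) * (INR j / INR k)).
  { rewrite <- sumR_threshold by exact Hml.
    rewrite <- (sumOver_pos (fun t => if Nat.ltb t m then INR (S j) / INR k else INR j / INR k))
      by apply NoDup_filter, seq_NoDup.
    apply sumOver_ext. reflexivity. }
  rewrite drift_bucket_sum. fold L. rewrite Eq, minus_INR, S_INR by exact Hml.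
  replace (sumOver p L) with (s + INR (length L) * (INR j / INR k)) by lra.
  replace (INR m * ((INR j + 1) / INR k) + (INR (length L) - INR m) * (INR j / INR k)
           - (s + INR (length L) * (INR j / INR k))) with ((INR m - INR k * s) / INR k) by (field; lra).
  split; apply Rmult_le_reg_r with (INR k); auto; field_simplify; lra.
Qed.

Lemma in_jrange k alpha j : In j (jrange k alpha) ->
  (nfloor (Rpower (INR k) alpha) <= j)%nat /\ (j <= Nat.div k 2)%nat.
Proof. unfold jrange. intros H. apply in_seq in H. lia. Qed.

(** Summing over the at most [k] buckets, the total drift is at most 1. *)
Lemma drift_pairs k alpha p n : (2 <= k)%nat -> Rabs (drift (pairs k alpha p n)) <= 1.
Proof.
  intros Hk. assert (Hk' : 0 < INR k) by (apply lt_0_INR; lia).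
  assert (H : forall l, (forall j, In j l -> (j <= Nat.div k 2)%nat) ->
            - (INR (length l) * / INR k) <= drift (flat_map (bucket k p n) l) <= 0).
  { induction l as [|j l IH]; intros Hl; [simpl; unfold drift; simpl; lra|].
    assert (Hdrift : forall P Q, drift (P ++ Q) = drift P + drift Q).
    { intros P Q. induction P; unfold drift in *; simpl; [ring|]. rewrite IHP. ring. }
    simpl flat_map. rewrite Hdrift. simpl length. rewrite S_INR.
    pose proof (drift_bucket k p n j ltac:(lia) (Hl j (or_introl eq_refl))).
    assert (- (INR (length l) * / INR k) <= drift (flat_map (bucket k p n) l) <= 0)
      by (apply IH; intros; apply Hl; now right).
    lra. }
  assert (Hlen : INR (length (jrange k alpha)) * / INR k <= 1).
  { apply Rmult_le_reg_r with (INR k); auto. rewrite Rmult_assoc, Rinv_l, Rmult_1_r, Rmult_1_l by lra.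
    apply le_INR. unfold jrange. rewrite length_seq.
    assert (Nat.div k 2 < k)%nat by (apply Nat.div_lt; lia). lia. }
  unfold pairs. destruct (H (jrange k alpha)) as [H1 H2]; [intros; eapply in_jrange; eauto|].
  rewrite Rabs_left1 by lra. lra.
Qed.

Lemma pairs_good k alpha p n : (4 <= k)%nat -> (nfloor (Rpower (INR k) alpha) <= k)%nat ->
  goodP (INR (nfloor (Rpower (INR k) alpha)) / (4 * INR k)) (pairs k alpha p n) /\
  forall pq, In pq (pairs k alpha p n) -> Rabs (snd pq - fst pq) <= / INR k.
Proof.
  intros Hk Ha. set (a := nfloor (Rpower (INR k) alpha)) in *.
  assert (Hk' : 4 <= INR k) by (replace 4 with (INR 4) by (simpl; lra); apply le_INR; lia).
  assert (Hpair : forall pq, In pq (pairs k alpha p n) ->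
    INR a / (4 * INR k) <= Rmin (fst pq) (snd pq) /\ Rmax (fst pq) (snd pq) <= 1 - INR a / (4 * INR k) /\
    Rabs (snd pq - fst pq) <= / INR k).
  { intros pq Hpq. apply in_flat_map in Hpq. destruct Hpq as [j [Hj Hpq]].
    apply in_jrange in Hj. fold a in Hj. destruct Hj as [Hj1 Hj2].
    apply in_map_iff in Hpq. destruct Hpq as [i [<- Hi]]. simpl fst; simpl snd.
    pose proof Hi as Hi'. apply filter_In in Hi'. destruct Hi' as [_ Hi'].
    destruct (inI_facts k j (p i) ltac:(lia) Hj2 Hi') as [X1 [X2 X3]].
    assert (Y : qround k p n j i = INR j / INR k \/ qround k p n j i = INR (S j) / INR k)
      by (unfold qround; destruct (Nat.ltb _ _); auto).
    assert (Aj : INR a <= INR j) by (apply le_INR; auto).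
    assert (J2 : INR j * 2 <= INR k).
    { pose proof (half_bounds k). assert (INR j <= INR (Nat.div k 2)) by (apply le_INR; auto). lra. }
    pose proof (pos_INR a).
    assert (Cj : INR a / (4 * INR k) <= INR j / INR k)
      by (apply Rmult_le_reg_r with (4 * INR k); [lra|field_simplify; lra]).
    assert (Cu : INR (S j) / INR k <= 1 - INR a / (4 * INR k)).
    { rewrite S_INR. apply Rmult_le_reg_r with (4 * INR k); [lra|field_simplify; lra]. }
    assert (D1 : INR (S j) / INR k - INR j / INR k = / INR k) by (rewrite S_INR; field; lra).
    split; [|split].
    - apply Rmin_glb; destruct Y as [Y|Y]; rewrite ?Y; lra.
    - apply Rmax_lub; destruct Y as [Y|Y]; rewrite ?Y; lra.
    - destruct Y as [Y|Y]; rewrite Y; unfold Rabs; destruct Rcase_abs; lra. }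
  split; intros pq Hpq; destruct (Hpair pq Hpq) as [? [? ?]]; auto.
Qed.

(** * Asymptotics in [k]. *)

Lemma Rpower_pos x y : 0 < Rpower x y.
Proof. apply exp_pos. Qed.

Lemma floor_kalpha alpha k : 0 < alpha < 1 ->
  (Nat.max 4 (S (nfloor (Rpower 2 (/ alpha)))) <= k)%nat ->
  (4 <= k)%nat /\ (nfloor (Rpower (INR k) alpha) <= k)%nat /\
  1 <= INR (nfloor (Rpower (INR k) alpha)) /\ Rpower (INR k) alpha <= 2 * INR (nfloor (Rpower (INR k) alpha)).
Proof.
  intros Ha HK. assert (Hk : 4 <= INR k) by (replace 4 with (INR 4) by (simpl; lra); apply le_INR; lia).
  assert (Hx : Rpower 2 (/ alpha) < INR k).
  { destruct (nfloor_spec (Rpower 2 (/ alpha)) (Rlt_le _ _ (Rpower_pos _ _))) as [_ H].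
    assert (INR (S (nfloor (Rpower 2 (/ alpha)))) <= INR k) by (apply le_INR; lia).
    rewrite S_INR in *. lra. }
  assert (Hka : 2 < Rpower (INR k) alpha).
  { replace 2 with (Rpower (Rpower 2 (/ alpha)) alpha)
      by (rewrite Rpower_mult, Rinv_l, Rpower_1; lra).
    apply Rlt_Rpower_l; [lra|split; [apply Rpower_pos|auto]]. }
  assert (Hk1 : Rpower (INR k) alpha <= INR k)
    by (rewrite <- (Rpower_1 (INR k)) at 2 by lra; apply Rle_Rpower; lra).
  pose proof (nfloor_spec (Rpower (INR k) alpha) ltac:(lra)) as Hfl.
  repeat split; [lia|apply INR_le; lra|lra|lra].
Qed.

Lemma rate_le_bound alpha beta k : 0 < beta < 1 -> 1 <= INR k ->
  Rpower (INR k) (- (alpha / 2)) <=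
  Rpower (INR k) (- ((alpha + beta - 1) / 2)) + Rpower (INR k) (- alpha)
  + Rpower (INR k) (- (1/2)) + Rpower (INR k) (- (1 - beta)).
Proof.
  intros Hb Hk.
  pose proof (Rpower_pos (INR k) (- alpha)). pose proof (Rpower_pos (INR k) (- (1/2))).
  pose proof (Rpower_pos (INR k) (- (1 - beta))).
  assert (Rpower (INR k) (- (alpha / 2)) <= Rpower (INR k) (- ((alpha + beta - 1) / 2)))
    by (apply Rle_Rpower; lra).
  lra.
Qed.

Lemma sqrt_floor_rate alpha k a : 0 < INR k -> 1 <= a -> Rpower (INR k) alpha <= 2 * a ->
  sqrt (96 / a) <= 16 * Rpower (INR k) (- (alpha / 2)).
Proof.
  intros Hk Ha Hka. pose proof (Rpower_pos (INR k) (- (alpha / 2))) as Hr.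
  rewrite <- (sqrt_pow2 (16 * Rpower (INR k) (- (alpha / 2)))) by lra.
  apply sqrt_le_1_alt.
  replace ((16 * Rpower (INR k) (- (alpha / 2)))^2) with (256 / Rpower (INR k) alpha).
  - pose proof (Rpower_pos (INR k) alpha).
    apply Rmult_le_reg_r with (a * Rpower (INR k) alpha); [nra|]. field_simplify; nra.
  - unfold Rdiv at 1. rewrite <- Rpower_Ropp.
    replace (- alpha) with (- (alpha / 2) + - (alpha / 2)) by field. rewrite Rpower_plus. ring.
Qed.

Theorem mainTheorem11 (alpha beta : R) :
  0 < alpha < 1 -> 0 < beta < 1 -> alpha + beta > 1 ->
  exists C : R, exists K : nat, forall k : nat, (K <= k)%nat -> (1 <= k)%nat ->
  forall (n : nat) (p : nat -> R),
    (forall i, (i < n)%nat -> 0 <= p i <= 1) ->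
    tv_sum (Xprobs k alpha p n) (Yprobs k alpha p n)
    <= C * (Rpower (INR k) (- ((alpha + beta - 1) / 2)) + Rpower (INR k) (- alpha)
            + Rpower (INR k) (- (1/2)) + Rpower (INR k) (- (1 - beta))).
Proof.
  intros Ha Hb _. exists 8, (Nat.max 4 (S (nfloor (Rpower 2 (/ alpha))))).
  intros k HK _ n p _.
  destruct (floor_kalpha alpha k Ha HK) as [Hk4 [Hak [Ha1 Hka]]].
  set (a := nfloor (Rpower (INR k) alpha)) in *.
  assert (Hk : 4 <= INR k) by (replace 4 with (INR 4) by (simpl; lra); apply le_INR; lia).
  set (c := INR a / (4 * INR k)).
  assert (Hc : 0 < c) by (apply Rdiv_lt_0_compat; lra).
  assert (Hc1 : 2 * c <= 1).
  { apply Rmult_le_reg_r with (4 * INR k); [lra|]. unfold c. field_simplify; [|lra].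
    apply le_INR in Hak. lra. }
  destruct (pairs_good k alpha p n Hk4 Hak) as [Hgood Hgap].
  (* the total variation distance is half the L1 distance of the coupled lists *)
  unfold tv_sum. rewrite Xprobs_pairs, Yprobs_pairs, !length_map, Nat.max_id, sum_f_R0_sumR.
  fold (L1 (S (length (pairs k alpha p n))) (map fst (pairs k alpha p n)) (map snd (pairs k alpha p n))).
  pose proof (L1_pairs_bound c (/ INR k) _ Hc Hc1 Hgood Hgap (drift_pairs k alpha p n ltac:(lia))) as HL.
  replace (24 * / INR k / c) with (96 / INR a) in HL by (unfold c; field; lra).
  pose proof (sqrt_floor_rate alpha k (INR a) ltac:(lra) Ha1 Hka).
  pose proof (rate_le_bound alpha beta k Hb ltac:(lra)). lra.
Qed.
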